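(* Let $d\ge 1$ and let $J$ be a positive semi-definite $d^2\times d^2$ complex matrix. Write $d\cdot J$ in block form with $d\times d$ blocks, $d\cdot J=[M^{ij}]_{i,j=1}^d$, and let $D^i=M^{ii}$ ($i=1,\dots,d$) be its diagonal blocks. Then $$\frac{1}{d}\sum_{i=1}^d\boldsymbol{\lambda}(D^i)\succ\boldsymbol{\lambda}(J),$$ where each vector $\boldsymbol{\lambda}(D^i)\in\mathbb{R}^d$ is padded with $d(d-1)$ zeros to have length $d^2$.
   Context: For a Hermitian matrix $X$, $\boldsymbol{\lambda}(X)$ denotes the vector of eigenvalues of $X$ arranged in non-increasing order. For real vectors $x,y$ of the same length $n$, $x\succ y$ ($x$ majorizes $y$) means $\sum_{i=1}^k x_i^\downarrow\ge\sum_{i=1}^k y_i^\downarrow$ for all $k\in\{1,\dots,n\}$, where $x^\downarrow$ is the rearrangement of $x$ in non-increasing order. *)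

(* Complex numbers are modelled by an arbitrary
   numClosedFieldType C (e.g. algC, or complex R for a real closed R),
   as in MathComp's spectral.v. *)
From HB Require Import structures.
From mathcomp Require Import all_boot all_order all_algebra.
From mathcomp Require Import sesquilinear spectral.
From mathcomp Require Import zify.
Set Implicit Arguments. Unset Strict Implicit. Unset Printing Implicit Defensive.
Import Order.TTheory GRing.Theory Num.Theory Num.Def.
Local Open Scope ring_scope.

Definition psdmx {C : numClosedFieldType} n (J : 'M[C]_n) : Prop :=
  J \is hermsymmx /\
  forall v : 'rV[C]_n, 0 <= (v *m J *m (map_mx conjC v)^T) 0 0.

Definition eigvals {C : numClosedFieldType} n (X : 'M[C]_n) : seq C :=
  sort (fun a b : C => b <= a) [seq spectral_diag X 0 i | i : 'I_n].

Definition majorizes {C : numClosedFieldType} (x y : seq C) : Prop :=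
  size x = size y /\
  forall k : nat, (k <= size x)%N ->
    \sum_(i < k) (sort (fun a b : C => b <= a) y)`_i <=
    \sum_(i < k) (sort (fun a b : C => b <= a) x)`_i.

(* index of entry (a,b) of block (i,j) in a d^2 x d^2 matrix: row i*d + a *)
Lemma blk_idx_proof (d : nat) (i a : 'I_d) : (i * d + a < d * d)%N.
Proof.
have hi := ltn_ord i; have ha := ltn_ord a.
have : (i.+1 * d <= d * d)%N by rewrite leq_mul2r hi orbT.
rewrite mulSn; lia.
Qed.

Definition blk_idx (d : nat) (i a : 'I_d) : 'I_(d * d) :=
  Ordinal (blk_idx_proof i a).

Definition block_of {C : numClosedFieldType} (d : nat) (A : 'M[C]_(d * d))
  (i j : 'I_d) : 'M[C]_d :=
  \matrix_(a < d, b < d) A (blk_idx i a) (blk_idx j b).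

Definition pad0 {C : numClosedFieldType} (m : nat) (s : seq C) : seq C :=
  s ++ nseq (m - size s) 0.

From HB Require Import structures.
From mathcomp Require Import all_boot all_order all_algebra.
From mathcomp Require Import perm sesquilinear spectral.
Set Implicit Arguments. Unset Strict Implicit. Unset Printing Implicit Defensive.
Import Order.TTheory GRing.Theory Num.Theory.
Local Open Scope ring_scope.
Local Open Scope sesquilinear_scope.

(* Write J = G^* G with G G^* = diag(lambda(J)), taking G = diag(sqrt lambda(J)) Q for a
   unitary Q diagonalising J.  Cutting the columns of G into d blocks G_i of width d gives
   D^i = d G_i^* G_i and G G^* = sum_i G_i G_i^*, so the k largest eigenvalues of J add up
   to sum_i sum_{a<k} [G_i G_i^*]_aa.  Each of these partial traces is at most
   (1/d) (lambda_1(D^i) + ... + lambda_k(D^i)) (Ky Fan): after rotating G_i so that its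
   columns are orthogonal with squared norms mu_b = lambda_b(D^i)/d, the partial trace is
   sum_b mu_b w_b with weights w_b in [0,1] of total at most k (the diagonal entries of an
   orthogonal projection are at most 1), and for nonincreasing mu >= 0 such a sum is at
   most mu_1 + ... + mu_k. *)

Lemma sum_weighted_le_prefix {R : numDomainType} N (mu : nat -> R) (w : 'I_N -> R) k :
  (forall a b, (a <= b)%N -> mu b <= mu a) -> (forall a, 0 <= mu a) ->
  (forall b, 0 <= w b <= 1) -> \sum_b w b <= k%:R ->
  \sum_(b < N) mu b * w b <= \sum_(b < k) mu b.
Proof.
move=> mu_noninc mu_ge0 w01 sum_w.
have [leNk|ltkN] := leqP N k.
  apply: (@le_trans _ _ (\sum_(b < N) mu b)).
    by apply: ler_sum => b _; have /andP[w0 w1] := w01 b; rewrite ler_piMr.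
  rewrite (big_ord_widen k mu leNk) [leRHS](bigID (fun b : 'I_k => (b < N)%N)) /=.
  by rewrite lerDl sumr_ge0.
have card_k : \sum_(b < N) (b < k)%:R = k%:R :> R.
  rewrite (eq_bigr (fun b : 'I_N => if (b < k)%N then 1 else 0)); last by move=> b; case: ltnP.
  by rewrite -big_mkcond -(big_ord_widen N (fun=> 1) (ltnW ltkN)) sumr_const card_ord.
rewrite (big_ord_widen N mu (ltnW ltkN)) [leRHS]big_mkcond -subr_le0 -sumrB /=.
(* compare every term with the threshold value mu k *)
apply: (@le_trans _ _ (\sum_(b < N) mu k * (w b - (b < k)%:R))).
  apply: ler_sum => b _; have /andP[w0 w1] := w01 b.
  case: ltnP => [ltbk|lekb] /=.
    by rewrite -[X in _ - X]mulr1 -!mulrBr ler_wnM2r ?subr_le0 // mu_noninc // ltnW.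
  by rewrite !subr0 ler_wpM2r // mu_noninc.
by rewrite -mulr_sumr sumrB card_k mulr_ge0_le0 ?subr_le0.
Qed.

Lemma sum1_ord_lt_le {R : numDomainType} n k : \sum_(a < n | (a < k)%N) 1 <= k%:R :> R.
Proof.
have [lekn|ltnk] := leqP k n.
  by rewrite -(big_ord_widen n (fun=> 1) lekn) sumr_const card_ord.
rewrite (eq_bigl xpredT) => [|a]; last by rewrite /= (ltn_trans (ltn_ord a)).
by rewrite sumr_const card_ord ler_nat ltnW.
Qed.

Section ConjugateTranspose.
Variable C : numClosedFieldType.

Lemma trmxCE m n (A : 'M[C]_(m, n)) i j : A^t* i j = (A j i)^*.
Proof. by rewrite !mxE. Qed.

Lemma trmxC_mul m n p (A : 'M[C]_(m, n)) (B : 'M[C]_(n, p)) :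
  (A *m B)^t* = B^t* *m A^t*.
Proof. by rewrite trmx_mul map_mxM. Qed.

Lemma mulmx_trmxC_diagE m n (A : 'M[C]_(m, n)) i :
  (A *m A^t*) i i = \sum_j A i j * (A i j)^*.
Proof. by rewrite mxE; apply: eq_bigr => j _; rewrite trmxCE. Qed.

Lemma trmxC_mulmx_diagE m n (A : 'M[C]_(m, n)) j :
  (A^t* *m A) j j = \sum_i A i j * (A i j)^*.
Proof. by rewrite mxE; apply: eq_bigr => i _; rewrite trmxCE mulrC. Qed.

Lemma trmxC_diag_real n (s : 'rV[C]_n) :
  (forall i, 0 <= s 0 i) -> (diag_mx s)^t* = diag_mx s.
Proof.
move=> s_ge0; rewrite tr_diag_mx map_diag_mx; congr diag_mx.
by apply/rowP => i; rewrite mxE; apply: geC0_conj.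
Qed.

Lemma unitarymx_rows_dot m n (P : 'M[C]_(m, n)) i j :
  P \is unitarymx -> \sum_l P i l * (P j l)^* = (i == j)%:R.
Proof.
move=> /unitarymxP /matrixP /(_ i j); rewrite !mxE => <-.
by apply: eq_bigr => l _; rewrite !mxE.
Qed.

Lemma trmxC_diag_mulE m n (U : 'M[C]_(m, n)) (s : 'rV[C]_m) i j :
  (U^t* *m diag_mx s *m U) i j = \sum_l (U l i)^* * s 0 l * U l j.
Proof. by rewrite mul_mx_diag !mxE; apply: eq_bigr => l _; rewrite !mxE. Qed.

End ConjugateTranspose.

Section OrthogonalColumns.
Variable C : numClosedFieldType.

Lemma herm_idempotent_diag_le1 n (P : 'M[C]_n) :
  P^t* = P -> P *m P = P -> forall a, P a a <= 1.
Proof.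
move=> P_herm P_idem a.
have Paa : P a a = \sum_c P a c * (P a c)^*.
  by rewrite -{1}P_idem -[X in P *m X]P_herm mulmx_trmxC_diagE.
have Paa_ge0 : 0 <= P a a by rewrite Paa sumr_ge0 // => c _; rewrite mul_conjC_ge0.
have : P a a * P a a <= P a a.
  rewrite [leRHS]Paa (bigD1 a) //= geC0_conj // lerDl.
  by rewrite sumr_ge0 // => c _; rewrite mul_conjC_ge0.
have [->|Paa_neq0] := eqVneq (P a a) 0; first by rewrite ler01.
by rewrite -[leRHS]mulr1 ler_pM2l // lt_def Paa_neq0.
Qed.

Lemma orthogonal_cols_row_sqnorms_le n m (H : 'M[C]_(n, m)) (mu : nat -> C) k :
  H^t* *m H = diag_mx (\row_b mu b) ->
  (forall a b, (a <= b)%N -> mu b <= mu a) -> (forall b, 0 <= mu b) ->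
  \sum_(a < n | (a < k)%N) (H *m H^t*) a a <= \sum_(b < k) mu b.
Proof.
move=> HH mu_noninc mu_ge0.
have sqnorm_ge0 a b : 0 <= H a b * (H a b)^* by apply: mul_conjC_ge0.
pose ps b := \sum_(a < n | (a < k)%N) H a b * (H a b)^*.
have ps_ge0 b : 0 <= ps b by apply: sumr_ge0.
have ps_le b : ps b <= mu b.
  have -> : mu b = (H^t* *m H) b b by rewrite HH !mxE eqxx mulr1n.
  rewrite trmxC_mulmx_diagE [leRHS](bigID (fun a : 'I_n => (a < k)%N)) /=.
  by rewrite lerDl sumr_ge0.
pose w (b : 'I_m) := (mu b)^-1 * ps b.
have mu_w (b : 'I_m) : mu b * w b = ps b.
  rewrite /w mulrA; have [mu0|mu_neq0] := eqVneq (mu b) 0; last by rewrite divff ?mul1r.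
  by rewrite mu0 !mul0r; apply/le_anti; rewrite ps_ge0 -mu0 ps_le.
have w01 (b : 'I_m) : 0 <= w b <= 1.
  rewrite mulr_ge0 ?invr_ge0 //=.
  have [mu0|mu_neq0] := eqVneq (mu b) 0; first by rewrite /w mu0 invr0 mul0r ler01.
  by rewrite -(ler_pM2l (_ : 0 < mu b)) ?mu_w ?mulr1 // lt_def mu_neq0 mu_ge0.
(* the orthogonal projection onto the range of H; 0^-1 = 0 handles null columns *)
pose Pi := H *m diag_mx (\row_b (mu b)^-1) *m H^t*.
have Pi_herm : Pi^t* = Pi.
  by rewrite !trmxC_mul trmxCK trmxC_diag_real ?mulmxA // => b; rewrite mxE invr_ge0.
have Pi_idem : Pi *m Pi = Pi.
  rewrite /Pi !mulmxA -[H *m _ *m H^t* *m H]mulmxA HH; congr (_ *m _).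
  rewrite -!mulmxA !mulmx_diag; congr (_ *m diag_mx _); apply/rowP => b; rewrite !mxE.
  by have [->|mu_neq0] := eqVneq (mu b) 0; rewrite ?invr0 ?mul0r // divff ?mulr1.
have Pi_diag a : Pi a a = \sum_(b < m) (mu b)^-1 * (H a b * (H a b)^*).
  by rewrite mxE; apply: eq_bigr => b _; rewrite mul_mx_diag !mxE mulrAC mulrC.
have sum_w : \sum_b w b <= k%:R.
  have -> : \sum_b w b = \sum_(a < n | (a < k)%N) Pi a a.
    rewrite [RHS](eq_bigr _ (fun a _ => Pi_diag a)).
    by rewrite exchange_big; apply: eq_bigr => b _; rewrite /w /ps mulr_sumr.
  apply: le_trans (sum1_ord_lt_le n k); apply: ler_sum => a _.
  exact: herm_idempotent_diag_le1.
have -> : \sum_(a < n | (a < k)%N) (H *m H^t*) a a = \sum_(b < m) mu b * w b.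
  under eq_bigr do rewrite mulmx_trmxC_diagE.
  by rewrite exchange_big; apply: eq_bigr => b _; rewrite mu_w.
exact: sum_weighted_le_prefix.
Qed.

End OrthogonalColumns.

Local Notation ger := (fun a b => b <= a).

Section Eigenvalues.
Variables (C : numClosedFieldType) (n : nat).
Implicit Types A J : 'M[C]_n.

Lemma eigvals_size A : size (eigvals A) = n.
Proof. by rewrite size_sort size_map size_enum_ord. Qed.

Lemma eigvals_sorted A : A \is hermsymmx -> sorted ger (eigvals A).
Proof.
move=> /hermitian_spectral_diag_real /mxOverP A_real.
apply: (sort_sorted_in (P := Num.real)) => [x y xr yr|]; first by rewrite /= real_leVge.
by apply/allP => _ /mapP[i _ ->]; apply: A_real.
Qed.

Lemma eigvals_diagonalization A : A \is hermsymmx ->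
  exists2 Q : 'M[C]_n, Q \is unitarymx &
    A = Q^t* *m diag_mx (\row_i (eigvals A)`_i) *m Q.
Proof.
move=> A_herm; have /orthomx_spectralP AE := hermitian_normalmx A_herm.
have spectralU := spectral_unitarymx A.
have : perm_eq (eigvals A) [tuple spectral_diag A 0 i | i < n] by rewrite /eigvals perm_sort.
move=> /tuple_permP[p Ep].
exists (\matrix_(i, j) spectralmx A (p i) j).
  apply/unitarymxP/matrixP => i j; rewrite !mxE -(inj_eq (@perm_inj _ p)).
  by rewrite -(unitarymx_rows_dot _ _ spectralU); apply: eq_bigr => l _; rewrite !mxE.
apply/matrixP => i j; rewrite trmxC_diag_mulE {1}AE invmx_unitary // trmxC_diag_mulE.
rewrite (reindex_inj (@perm_inj _ p)); apply: eq_bigr => l _.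
by rewrite !mxE Ep -tnth_nth !tnth_mktuple.
Qed.

Lemma psdmx_eigvals_ge0 J : psdmx J -> forall i, 0 <= (eigvals J)`_i.
Proof.
move=> [J_herm J_psd] i; have [lt_in|] := ltnP i n; last first.
  by move=> le_ni; rewrite nth_default ?eigvals_size.
have [Q QU JE] := eigvals_diagonalization J_herm.
pose e := delta_mx 0 (Ordinal lt_in) : 'rV[C]_n.
have := J_psd (e *m Q); rewrite map_trmx {1}JE trmxC_mul !mulmxA !mulmxtVK //.
rewrite mul_mx_diag mxE (bigD1 (Ordinal lt_in)) //= big1 => [|j /negbTE ne_ji]; last first.
  by rewrite !mxE ne_ji andbF mulr0n conjC0 mulr0.
by rewrite addr0 !mxE !eqxx !mulr1n mul1r conjC1 mulr1.
Qed.

Lemma eigvals_noninc J : psdmx J ->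
  forall i j, (i <= j)%N -> (eigvals J)`_j <= (eigvals J)`_i.
Proof.
move=> J_psd i j le_ij; have [lt_jn|le_nj] := ltnP j n; last first.
  by rewrite [leLHS]nth_default ?eigvals_size ?psdmx_eigvals_ge0.
apply: (sorted_leq_nth (fun _ _ _ h1 h2 => le_trans h2 h1) lexx) => //.
- exact: eigvals_sorted J_psd.1.
- by rewrite inE eigvals_size (leq_ltn_trans le_ij).
- by rewrite inE eigvals_size.
Qed.

Lemma psdmx_gram m (G : 'M[C]_(m, n)) (c : C) : 0 <= c -> psdmx (c *: (G^t* *m G)).
Proof.
move=> c_ge0; split.
  by apply/sesquiP; rewrite expr0 scale1r linearZ map_mxZ /= trmxC_mul trmxCK geC0_conj.
move=> v; rewrite map_trmx -scalemxAr -scalemxAl mxE mulr_ge0 //.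
have -> : v *m (G^t* *m G) *m v^t* = (v *m G^t*) *m (v *m G^t*)^t*.
  by rewrite trmxC_mul trmxCK !mulmxA.
by rewrite mulmx_trmxC_diagE sumr_ge0 // => j _; rewrite mul_conjC_ge0.
Qed.

Lemma rows_gram_le_eigvals m (G : 'M[C]_(m, n)) (c : C) k : 0 < c ->
  \sum_(a < m | (a < k)%N) (G *m G^t*) a a <=
  c^-1 * \sum_(b < k) (eigvals (c *: (G^t* *m G)))`_b.
Proof.
move=> c_gt0; have A_psd := psdmx_gram G (ltW c_gt0).
set A := c *: _ in A_psd *; set lambda := eigvals A.
have [Q QU AE] := eigvals_diagonalization A_psd.1.
have -> : G *m G^t* = (G *m Q^t*) *m (G *m Q^t*)^t*.
  by rewrite trmxC_mul trmxCK mulmxA mulmxKtV.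
rewrite mulr_sumr; apply: (orthogonal_cols_row_sqnorms_le (mu := fun b => c^-1 * lambda`_b)).
- have GG : G^t* *m G = c^-1 *: A by rewrite scalerA mulVf ?gt_eqF // scale1r.
  rewrite trmxC_mul trmxCK -mulmxA [G^t* *m _]mulmxA GG AE scalemxAl scalemxAr.
  rewrite !mulmxA (unitarymxP QU) mul1mx mulmxtVK //.
  by apply/matrixP => i j; rewrite !mxE mulrnAr.
- by move=> i j le_ij; rewrite ler_pM2l ?invr_gt0 ?eigvals_noninc.
- by move=> b; rewrite mulr_ge0 ?psdmx_eigvals_ge0 // invr_ge0 ltW.
Qed.

Lemma psdmx_gram_eigvals J : psdmx J -> exists G : 'M[C]_n,
  J = G^t* *m G /\ G *m G^t* = diag_mx (\row_i (eigvals J)`_i).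
Proof.
move=> J_psd; have [Q QU JE] := eigvals_diagonalization J_psd.1.
pose r : 'rV[C]_n := \row_i sqrtC (eigvals J)`_i.
have r_ge0 i : 0 <= r 0 i by rewrite mxE sqrtC_ge0 psdmx_eigvals_ge0.
have r2 : diag_mx r *m diag_mx r = diag_mx (\row_i (eigvals J)`_i).
  by rewrite mulmx_diag; congr diag_mx; apply/rowP => i; rewrite !mxE -expr2 sqrtCK.
exists (diag_mx r *m Q); rewrite trmxC_mul trmxC_diag_real //; split.
  by rewrite mulmxA -[_ *m diag_mx r *m diag_mx r]mulmxA r2.
by rewrite -mulmxA [Q *m _]mulmxA (unitarymxP QU) mul1mx r2.
Qed.

End Eigenvalues.

Lemma sum_blk_idx {R : nmodType} d (F : 'I_(d * d) -> R) : (0 < d)%N ->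
  \sum_(c < d * d) F c = \sum_(i < d) \sum_(b < d) F (blk_idx i b).
Proof.
move=> d_gt0; rewrite pair_big /=.
have div_lt (c : 'I_(d * d)) : (c %/ d < d)%N by rewrite ltn_divLR.
have mod_lt (c : 'I_(d * d)) : (c %% d < d)%N by rewrite ltn_pmod.
rewrite (reindex (fun p : 'I_d * 'I_d => blk_idx p.1 p.2)) //.
exists (fun c => (Ordinal (div_lt c), Ordinal (mod_lt c))) => [[i b]|c] _.
  congr pair; apply: val_inj => /=.
    by rewrite divnMDl // divn_small // addn0.
  by rewrite modnMDl modn_small.
by apply: val_inj => /=; rewrite -divn_eq.
Qed.

Definition col_block {R : Type} m d (G : 'M[R]_(m, d * d)) (i : 'I_d) : 'M[R]_(m, d) :=
  \matrix_(a, b) G a (blk_idx i b).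

Section Blocks.
Variables (C : numClosedFieldType) (m d : nat) (G : 'M[C]_(m, d * d)).

Lemma block_of_gram (c : C) i j :
  block_of (c *: (G^t* *m G)) i j = c *: ((col_block G i)^t* *m col_block G j).
Proof.
apply/matrixP => a b; rewrite !mxE; congr (_ * _).
by apply: eq_bigr => l _; rewrite !mxE.
Qed.

Lemma mulmx_trmxC_col_blocks : (0 < d)%N ->
  G *m G^t* = \sum_i col_block G i *m (col_block G i)^t*.
Proof.
move=> d_gt0; apply/matrixP => a a'; rewrite summxE mxE (sum_blk_idx _ d_gt0).
by apply: eq_bigr => i _; rewrite mxE; apply: eq_bigr => b _; rewrite !mxE.
Qed.

End Blocks.

Lemma pad0_nth {C : numClosedFieldType} m (s : seq C) a : (pad0 m s)`_a = s`_a.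
Proof.
rewrite /pad0 nth_cat; case: ltnP => // le_sa.
by rewrite nth_nseq nth_default //; case: ifP.
Qed.

Lemma majorizes_sorted {C : numClosedFieldType} (x y : seq C) :
  size x = size y -> sorted ger x -> sorted ger y ->
  (forall k, (k <= size x)%N -> \sum_(i < k) y`_i <= \sum_(i < k) x`_i) ->
  majorizes x y.
Proof.
have ge_trans : transitive (fun a b : C => b <= a) by move=> a b c /= h1 h2; apply: le_trans h2 h1.
move=> size_xy x_sorted y_sorted prefix_le.
by split => //; rewrite !(sorted_sort ge_trans).
Qed.

Theorem theorem1 (C : numClosedFieldType) (d : nat) (hd : (1 <= d)%N)
  (J : 'M[C]_(d * d)) (hJ : psdmx J) :
  let M := block_of (d%:R *: J) in
  let D := fun i : 'I_d => M i i in
  majorizes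
    (mkseq (fun k => d%:R^-1 * \sum_(i < d) (pad0 (d * d) (eigvals (D i)))`_k)
       (d * d))
    (eigvals J).
Proof.
move=> M D.
have d_gt0 : 0 < d%:R :> C by rewrite ltr0n.
have [G [JE GGE]] := psdmx_gram_eigvals hJ.
have DE i : D i = d%:R *: ((col_block G i)^t* *m col_block G i).
  by rewrite /D /M JE block_of_gram.
have D_psd i : psdmx (D i) by rewrite DE; apply: psdmx_gram; rewrite ltW.
set x := mkseq _ _.
have xE b : (b < d * d)%N -> x`_b = d%:R^-1 * \sum_i (eigvals (D i))`_b.
  by move=> lt_b; rewrite nth_mkseq //; under eq_bigr do rewrite pad0_nth.
apply: majorizes_sorted.
- by rewrite size_mkseq eigvals_size.
- apply/(sortedP 0) => b; rewrite size_mkseq => lt_b1.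
  rewrite !xE ?(ltnW lt_b1) // ler_pM2l ?invr_gt0 //.
  by apply: ler_sum => i _; apply: eigvals_noninc.
- exact: eigvals_sorted hJ.1.
rewrite size_mkseq => k le_k.
have -> : \sum_(b < k) x`_b = \sum_i d%:R^-1 * \sum_(b < k) (eigvals (D i))`_b.
  rewrite -mulr_sumr exchange_big mulr_sumr; apply: eq_bigr => b _.
  by rewrite xE // (leq_trans (ltn_ord b)).
rewrite (big_ord_widen _ (fun a => (eigvals J)`_a) le_k).
rewrite (eq_bigr (fun a => (G *m G^t*) a a)) => [|a _]; last first.
  by rewrite GGE !mxE eqxx mulr1n.
rewrite (mulmx_trmxC_col_blocks G hd); under eq_bigr do rewrite summxE.
rewrite exchange_big; apply: ler_sum => i _; rewrite DE.
exact: rows_gram_le_eigvals.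
Qed.
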